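(* Let $\pi:\mathbb{F}\twoheadrightarrow\Gamma$ be an epimorphism from a free group on a finite basis $X$ which is not an isomorphism, let $S=\pi(X)$, and suppose $\Gamma$ is sofic and stable. Then there exists $C>0$ such that for all $l\ge C$, $$\mathcal{D}_\Gamma^S\big(2F_\Gamma^\pi(10l)\big)!\ge\mathcal{R}_\Gamma^S(l).$$
   Context: For finite $\Omega$, $d_\Omega(\sigma,\tau)=|\{\omega:\sigma(\omega)\ne\tau(\omega)\}|/|\Omega|$. A pair $(\delta,E)$, $\delta\in(0,1]$, $E\subseteq\ker\pi$ finite, is valid for $\epsilon>0$ if for every finite $\Omega$ and homomorphism $\rho:\mathbb{F}\to\mathrm{Sym}(\Omega)$ with $d_\Omega(\rho(r),\mathrm{id})<\delta$ for all $r\in E$ there is a homomorphism $\phi:\Gamma\to\mathrm{Sym}(\Omega)$ with $d_\Omega(\rho(x),\phi(\pi(x)))<\epsilon$ for all $x\in X$; $\Gamma$ is stable if valid pairs exist for all $\epsilon$. $F_\Gamma^\pi(x)=\inf\{\|E\|/\delta:(\delta,E)\text{ valid for }1/x\}$, $\|E\|=\sum_{r\in E}|r|$ (word length in $X$). For finite $A\subseteq\Gamma$ and $\epsilon>0$, an $(A,\epsilon)$-almost representation is a map $\phi:A\to\mathrm{Sym}(\Omega)$, $\Omega$ finite, such that for $g,h\in A$: if $gh\in A$ then $d_\Omega(\phi(gh),\phi(g)\phi(h))<\epsilon$; if $g\ne e$ then $d_\Omega(\phi(g),\mathrm{id})>1-\epsilon$; if $e\in A$ then $\phi(e)=\mathrm{id}$.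 $\Gamma$ is sofic if these exist for all finite $A$ and $\epsilon>0$. $B_S(l)$ is the ball of radius $l$ in the word metric of $S$. The sofic profile $\mathcal{D}_\Gamma^S(l)$ is the minimal $|\Omega|$ for which a $(B_S(l),1/l)$-almost representation into $\mathrm{Sym}(\Omega)$ exists; for real $t\ge1$, $\mathcal{D}_\Gamma^S(t)=\mathcal{D}_\Gamma^S(\lfloor t\rfloor)$. $\mathcal{R}_\Gamma^S(l)$ is the minimal order of a finite group $\Delta$ with a homomorphism $\Gamma\to\Delta$ injective on $B_S(l)$. *)

From mathcomp Require Import all_boot all_order all_algebra all_fingroup.
From mathcomp Require Import classical_sets reals Rstruct.

Set Implicit Arguments.
Unset Strict Implicit.
Unset Printing Implicit Defensive.

Import Order.TTheory GRing.Theory Num.Theory.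

Notation R := Rdefinitions.R.

(* The free group F on the finite basis X = 'I_k.                      *)
(* A letter (i, false) stands for x_i, (i, true) for x_i^{-1}.         *)
(* Elements of F are the reduced words.                                *)
Definition letter (k : nat) := ('I_k * bool)%type.

Fixpoint reduced (k : nat) (w : seq (letter k)) : bool :=
  match w with
  | a :: ((b :: _) as t) => ~~ ((a.1 == b.1) && (a.2 != b.2)) && reduced t
  | _ => true
  end.

(* value of a word under the homomorphism F -> G sending x_i to f i
   (universal property of the free group: homomorphisms F -> G are
   exactly the maps X -> G). *)
Definition weval (k : nat) (G : groupType) (f : 'I_k -> G)
    (w : seq (letter k)) : G :=
  foldr (fun a acc => ((if a.2 then (f a.1)^-1 else f a.1) * acc)%g) 1%g w.

(* ker pi, for pi : F -> Gamma, x_i |-> g i *)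
Definition in_ker (k : nat) (Gamma : groupType) (g : 'I_k -> Gamma)
    (w : seq (letter k)) : Prop :=
  reduced w /\ weval g w = 1%g.

Definition epi (k : nat) (Gamma : groupType) (g : 'I_k -> Gamma) : Prop :=
  forall y : Gamma, exists w : seq (letter k), reduced w /\ weval g w = y.

(* pi is not an isomorphism (given surjectivity): nontrivial kernel *)
Definition not_iso (k : nat) (Gamma : groupType) (g : 'I_k -> Gamma) : Prop :=
  exists w : seq (letter k), in_ker g w /\ w <> [::].

Definition hdist (n : nat) (s t : {perm 'I_n}) : R :=
  ((#|[set o | s o != t o]|)%:R / n%:R)%R.

Definition is_hom (Gamma H : groupType) (phi : Gamma -> H) : Prop :=
  forall a b : Gamma, phi (a * b)%g = (phi a * phi b)%g.

Definition Enorm (k : nat) (E : seq (seq (letter k))) : nat :=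
  \sum_(r <- E) size r.

Definition valid_pair (k : nat) (Gamma : groupType) (g : 'I_k -> Gamma)
    (eps : R) (delta : R) (E : seq (seq (letter k))) : Prop :=
  (0 < delta)%R /\ (delta <= 1)%R /\ uniq E /\
  (forall r, r \in E -> in_ker g r) /\
  forall (n : nat) (rho : 'I_k -> {perm 'I_n}),
    (forall r, r \in E -> (hdist (weval rho r) 1%g < delta)%R) ->
    exists phi : Gamma -> {perm 'I_n},
      is_hom phi /\ forall i : 'I_k, (hdist (rho i) (phi (g i)) < eps)%R.

Definition stable (k : nat) (Gamma : groupType) (g : 'I_k -> Gamma) : Prop :=
  forall eps : R, (0 < eps)%R -> exists delta E, valid_pair g eps delta E.

Definition stab_fun (k : nat) (Gamma : groupType) (g : 'I_k -> Gamma)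
    (x : R) : R :=
  inf [set y : R | exists delta E,
          valid_pair g (x^-1)%R delta E /\ y = ((Enorm E)%:R / delta)%R].

(* (A, eps)-almost representation into Sym('I_n); A given as a predicate
   (a finite set); phi is only relevant on A. *)
Definition almost_rep (Gamma : groupType) (A : Gamma -> Prop) (eps : R)
    (n : nat) (phi : Gamma -> {perm 'I_n}) : Prop :=
  (forall a b, A a -> A b -> A (a * b)%g ->
     (hdist (phi (a * b)%g) (phi a * phi b)%g < eps)%R) /\
  (forall a, A a -> a <> 1%g -> (1 - eps < hdist (phi a) 1%g)%R) /\
  (A 1%g -> phi 1%g = 1%g).

Definition sofic (Gamma : groupType) : Prop :=
  forall (A : seq Gamma) (eps : R), (0 < eps)%R ->
    exists (n : nat) (phi : Gamma -> {perm 'I_n}),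
      almost_rep (fun a => a \in A) eps phi.

Definition ball (k : nat) (Gamma : groupType) (g : 'I_k -> Gamma) (l : nat)
    (a : Gamma) : Prop :=
  exists w : seq (letter k), size w <= l /\ weval g w = a.

Definition is_least (P : nat -> Prop) (n : nat) : Prop :=
  P n /\ forall m, P m -> n <= m.

(* sofic profile D_Gamma^S(l) = least n with a (B_S(l), 1/l)-almost rep *)
Definition sofic_profile_at (k : nat) (Gamma : groupType) (g : 'I_k -> Gamma)
    (l : nat) (n : nat) : Prop :=
  exists phi : Gamma -> {perm 'I_n}, almost_rep (ball g l) (l%:R^-1)%R phi.

(* "R_Gamma^S(l) <= N": there is a finite group Delta of order <= N and a
   homomorphism Gamma -> Delta injective on B_S(l). *)
Definition residual_le (k : nat) (Gamma : groupType) (g : 'I_k -> Gamma)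
    (l : nat) (N : nat) : Prop :=
  exists (Delta : finGroupType) (f : Gamma -> Delta),
    is_hom f /\
    (forall a b, ball g l a -> ball g l b -> f a = f b -> a = b) /\
    #|[set: Delta]| <= N.

From mathcomp Require Import all_boot all_order all_algebra all_fingroup.
From mathcomp Require Import boolp classical_sets reals Rstruct.
From mathcomp Require Import ring lra.

(* Fix a nonempty reduced relator w0.  A nonempty reduced word r is not a law
   in Sym(|r|+1): its letters can be made to walk the path 0 -> 1 -> ... -> |r|.
   Letting Sym(|r|+1) act regularly on n >= (|r|+1)! points puts every word
   within (|r|+1)!/n of the identity, and r exactly that far.  Tested against
   a valid pair (delta, E) for epsilon, this forces a nonempty r in E (w0 rules
   out the trivial E) and, for n ~ (|r|+1)!/delta, delta <= 2 |r| epsilon; so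
   F(x) >= x/2.
   With L = floor(2 F(10 l)) and a valid pair for 1/(10 l) with
   ||E||/delta < L, an almost representation psi on B_S(L) satisfies every
   relator of E up to delta, so stability gives a homomorphism phi within
   1/(10 l) of psi on S.  On B_S(2l) psi then stays within 2l/L + 1/5 of phi,
   while it moves nontrivial elements by more than 1 - 1/L; as L >= 10 l - 1,
   phi is injective on B_S(l), and Sym(D) has D! elements. *)

Set Implicit Arguments.
Unset Strict Implicit.
Unset Printing Implicit Defensive.

Import Order.TTheory GRing.Theory Num.Theory.

Section WordEvaluation.
Variables (k : nat) (G : groupType) (f : 'I_k -> G).

Definition winv (w : seq (letter k)) : seq (letter k) :=
  rev (map (fun a => (a.1, ~~ a.2)) w).

Lemma size_winv w : size (winv w) = size w.
Proof. by rewrite size_rev size_map. Qed.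

Lemma weval_cat u v : weval f (u ++ v) = (weval f u * weval f v)%g.
Proof. by elim: u => [|a u IHu] /=; rewrite ?mul1g // IHu mulgA. Qed.

Lemma weval_winv w : weval f (winv w) = (weval f w)^-1%g.
Proof.
elim: w => [|a w IHw]; first by rewrite invg1.
rewrite /winv /= rev_cons -cats1 weval_cat -/(winv w) IHw /= mulg1 invMg.
by case: a.2; rewrite ?invgK.
Qed.

Lemma ball_invM l a b : ball f l a -> ball f l b -> ball f (l + l) (a^-1 * b)%g.
Proof.
move=> [u [ul <-]] [v [vl <-]]; exists (winv u ++ v).
by rewrite size_cat size_winv weval_cat weval_winv leq_add.
Qed.

End WordEvaluation.

Section Homomorphisms.
Variables (G H : groupType) (phi : G -> H).
Hypothesis phi_hom : is_hom phi.

Lemma is_hom1 : phi 1%g = 1%g.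
Proof. by apply: (@mulgI _ (phi 1%g)); rewrite -phi_hom !mulg1. Qed.

Lemma is_homV x : phi x^-1%g = (phi x)^-1%g.
Proof. by apply: (@mulIg _ (phi x)); rewrite -phi_hom !mulVg is_hom1. Qed.

Lemma weval_hom k (f : 'I_k -> G) w :
  weval (fun i => phi (f i)) w = phi (weval f w).
Proof.
elim: w => [|a w IHw] /=; first by rewrite is_hom1.
by rewrite phi_hom IHw; case: a.2; rewrite ?is_homV.
Qed.

End Homomorphisms.

Section HammingDistance.
Variable n : nat.
Implicit Types s t u : {perm 'I_n}.

Definition ndiff s t := #|[set o | s o != t o]|.

Lemma ndiffC s t : ndiff s t = ndiff t s.
Proof. by apply: eq_card => o; rewrite !inE eq_sym. Qed.

Lemma ndiffxx s : ndiff s s = 0.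
Proof. by apply/eqP; rewrite cards_eq0; apply/eqP/setP => o; rewrite !inE eqxx. Qed.

Lemma ndiff_triangle s t u : ndiff s u <= ndiff s t + ndiff t u.
Proof.
apply: leq_trans (leq_card_setU [set o | s o != t o] [set o | t o != u o]).
apply/subset_leq_card/fintype.subsetP => o; rewrite !inE.
by case: (s o =P t o) => [->|].
Qed.

Lemma ndiffMr s t u : ndiff (s * u) (t * u) = ndiff s t.
Proof. by apply: eq_card => o; rewrite !inE !permM (inj_eq perm_inj). Qed.

Lemma ndiffMl s t u : ndiff (u * s) (u * t) = ndiff s t.
Proof.
rewrite /ndiff -[RHS](card_preimset _ (@perm_inj _ u)).
by apply: eq_card => o; rewrite !inE !permM.
Qed.

Lemma ndiffV s t : ndiff s^-1 t^-1 = ndiff s t.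
Proof. by rewrite -(ndiffMl _ _ s) -(ndiffMr _ _ t) mulgV mulgKV mul1g ndiffC. Qed.

Lemma ndiffM s t s' t' : ndiff (s * t) (s' * t') <= ndiff s s' + ndiff t t'.
Proof. by rewrite -(ndiffMr s s' t) -(ndiffMl t t' s'); apply: ndiff_triangle. Qed.

Local Open Scope ring_scope.

Lemma hdistE s t : hdist s t = (ndiff s t)%:R / n%:R.
Proof. by []. Qed.

Lemma hdistC s t : hdist s t = hdist t s.
Proof. by rewrite !hdistE ndiffC. Qed.

Lemma hdistxx s : hdist s s = 0.
Proof. by rewrite hdistE ndiffxx mul0r. Qed.

Lemma hdist_triangle s t u : hdist s u <= hdist s t + hdist t u.
Proof. by rewrite !hdistE -mulrDl ler_wpM2r ?invr_ge0 // -natrD ler_nat ndiff_triangle. Qed.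

Lemma hdistMl s t u : hdist (u * s) (u * t) = hdist s t.
Proof. by rewrite !hdistE ndiffMl. Qed.

Lemma hdistV s t : hdist s^-1 t^-1 = hdist s t.
Proof. by rewrite !hdistE ndiffV. Qed.

Lemma hdistM s t s' t' : hdist (s * t) (s' * t') <= hdist s s' + hdist t t'.
Proof. by rewrite !hdistE -mulrDl ler_wpM2r ?invr_ge0 // -natrD ler_nat ndiffM. Qed.

End HammingDistance.

Lemma perm_extend_in (X : finType) (D : {set X}) (f : X -> X) :
  {in D &, injective f} -> exists s : {perm X}, {in D, s =1 f}.
Proof.
move=> f_inj.
set A := enum (~: D); set B := enum (~: (f @: D)).
have size_AB : size A = size B.
  rewrite -!cardE; apply/eqP; rewrite -(eqn_add2l #|D|) cardsC.
  by rewrite -{1}(card_in_imset f_inj) cardsC.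
pose h x := nth x B (index x A).
pose s x := if x \in D then f x else h x.
have hB x : x \notin D -> h x \in B.
  by move=> xD; apply: mem_nth; rewrite -size_AB index_mem mem_enum inE.
have s_inj : injective s.
  move=> x y; rewrite /s.
  case: (boolP (x \in D)) => xD; case: (boolP (y \in D)) => yD.
  - exact: f_inj.
  - by move=> fx_hy; have := hB y yD; rewrite -fx_hy mem_enum inE imset_f.
  - by move=> hx_fy; have := hB x xD; rewrite hx_fy mem_enum inE imset_f.
  have xA : x \in A by rewrite mem_enum inE.
  have yA : y \in A by rewrite mem_enum inE.
  have iB z : z \in A -> index z A < size B by rewrite -size_AB index_mem.
  rewrite /h (set_nth_default y) ?iB // => /eqP.
  by rewrite nth_uniq ?iB ?enum_uniq // => /eqP /(index_inj x xA yA).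
by exists (perm s_inj) => x xD; rewrite permE /s xD.
Qed.

Lemma reduced_nth_inverse k (a0 : letter k) (u : seq (letter k)) j i b :
  reduced u -> j.+1 < size u -> nth a0 u j = (i, b) -> nth a0 u j.+1 != (i, ~~ b).
Proof.
elim: u j => [|a [|a' v] IHv] [|j] //= /andP[red_aa' red_v] lt_j.
  by move=> a_ib; apply: contraNneq red_aa' => ->; rewrite a_ib /= eqxx; case: (b).
exact: IHv.
Qed.

Section PathPermutation.
Variables (k : nat) (a0 : letter k) (u : seq (letter k)).
Hypothesis u_reduced : reduced u.
Local Notation m := (size u).

(* The points 0, ..., m form a path along which the j-th letter of u moves
   j to j.+1: a letter x_i makes sigma i send j to j.+1, a letter x_i^-1
   makes it send j.+1 to j.  Reducedness keeps these partial maps injective. *)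
Definition path_fwd (i : 'I_k) (p : nat) := (p < m) && (nth a0 u p == (i, false)).
Definition path_bwd (i : 'I_k) (p : nat) := (0 < p) && (nth a0 u p.-1 == (i, true)).

Definition path_dom i : {set 'I_m.+1} := [set p : 'I_m.+1 | path_fwd i p || path_bwd i p].

Definition path_step i (p : 'I_m.+1) : 'I_m.+1 :=
  inord (if path_fwd i p then p.+1 else p.-1).

Lemma path_fwd_bwd i p q : q <= m -> path_fwd i p -> path_bwd i q -> p.+1 != q.-1.
Proof.
move=> le_qm /andP[_ /eqP u_p] /andP[q_gt0 /eqP u_q]; apply/eqP => pq.
have lt_pm : p.+1 < m by rewrite pq -ltnS prednK.
by have := reduced_nth_inverse u_reduced lt_pm u_p; rewrite pq u_q eqxx.
Qed.

Lemma path_step_inj i : {in path_dom i &, injective (path_step i)}.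
Proof.
have step_lt (p : 'I_m.+1) : (if path_fwd i p then p.+1 else p.-1) < m.+1.
  by case: ifP => [/andP[]|_] //; apply: leq_ltn_trans (leq_pred p) _.
move=> p q; rewrite !inE /path_step => Dp Dq /(congr1 (@nat_of_ord _)); rewrite !inordK //.
have le_pm : p <= m by rewrite -ltnS.
have le_qm : q <= m by rewrite -ltnS.
case: (boolP (path_fwd i p)) => fp; case: (boolP (path_fwd i q)) => fq.
- by move=> [] /val_inj.
- rewrite (negbTE fq) /= in Dq.
  by move=> pq; have := path_fwd_bwd le_qm fp Dq; rewrite pq eqxx.
- rewrite (negbTE fp) /= in Dp.
  by move=> pq; have := path_fwd_bwd le_pm fq Dp; rewrite pq eqxx.
rewrite (negbTE fp) /= in Dp; rewrite (negbTE fq) /= in Dq.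
case/andP: Dp => p_gt0 _; case/andP: Dq => q_gt0 _ pq.
by apply: val_inj; rewrite /= -(prednK p_gt0) -(prednK q_gt0) pq.
Qed.

Variable sigma : 'I_k -> {perm 'I_m.+1}.
Hypothesis sigma_path : forall i, {in path_dom i, sigma i =1 path_step i}.

Lemma path_letter j : j < m ->
  (if (nth a0 u j).2 then (sigma (nth a0 u j).1)^-1 else sigma (nth a0 u j).1)%g
    (inord j) = inord j.+1.
Proof.
move=> lt_jm; have le_jm := ltnW lt_jm.
case u_j: (nth a0 u j) => [i []] /=; last first.
  have fj : path_fwd i j by rewrite /path_fwd lt_jm u_j eqxx.
  by rewrite sigma_path ?inE /path_step (@inordK _ j) ?fj.
have bj : path_bwd i j.+1 by rewrite /path_bwd /= u_j.
have fj : ~~ path_fwd i j.+1.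
  apply/andP => -[lt_j1m /eqP u_j1].
  by have := reduced_nth_inverse u_reduced lt_j1m u_j; rewrite u_j1 eqxx.
apply: (@perm_inj _ (sigma i)); rewrite -permM mulVg perm1.
by rewrite sigma_path ?inE /path_step (@inordK _ j.+1) ?(negbTE fj) ?bj ?orbT.
Qed.

Lemma path_walk j : j <= m -> weval sigma (drop j u) (inord j) = inord m.
Proof.
move=> le_jm; move dE: (m - j) => d; elim: d j le_jm dE => [|d IHd] j le_jm dE.
  have -> : j = m by apply/eqP; rewrite eqn_leq le_jm -subn_eq0 dE.
  by rewrite drop_size perm1.
have lt_jm : j < m by rewrite -subn_gt0 dE.
by rewrite (drop_nth a0 lt_jm) /= permM path_letter // IHd // subnS dE.
Qed.

Lemma path_weval_neq1 : 0 < m -> weval sigma u != 1%g.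
Proof.
move=> m_gt0; apply/eqP => u1.
have := path_walk (leq0n m); rewrite drop0 u1 perm1 => /(congr1 (@nat_of_ord _)).
by rewrite !inordK //= => m0; rewrite -m0 in m_gt0.
Qed.

End PathPermutation.

Lemma reduced_word_not_law k (u : seq (letter k)) : reduced u -> u <> [::] ->
  exists sigma : 'I_k -> {perm 'I_(size u).+1}, weval sigma u != 1%g.
Proof.
case: u => [//|a0 v] u_red _.
have [sigma sigma_path] :=
  fin_all_exists (fun i => perm_extend_in (path_step_inj (a0 := a0) (i := i) u_red)).
by exists sigma; apply: path_weval_neq1.
Qed.

Section RegularPermutation.
Variables (X : finGroupType) (n : nat).
Hypothesis le_Xn : #|X| <= n.

(* The right regular action of X, transported into 'I_n through enum_rank and
   extended by the identity on the n - #|X| remaining points. *)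
Definition reg_slot (x : X) : 'I_n := widen_ord le_Xn (enum_rank x).

Lemma reg_slot_inj : injective reg_slot.
Proof. by move=> x y /(congr1 (@nat_of_ord _)) /= /val_inj /enum_rank_inj. Qed.

Definition reg_fun (s : X) (o : 'I_n) : 'I_n :=
  if [pick x | reg_slot x == o] is Some x then reg_slot (x * s)%g else o.

Lemma reg_fun_slot s x : reg_fun s (reg_slot x) = reg_slot (x * s)%g.
Proof.
by rewrite /reg_fun; case: pickP => [y /eqP/reg_slot_inj -> // | /(_ x)]; rewrite eqxx.
Qed.

Lemma reg_fun_out s o : (forall x, reg_slot x != o) -> reg_fun s o = o.
Proof.
by move=> o_out; rewrite /reg_fun; case: pickP => [y|//]; rewrite (negbTE (o_out y)).
Qed.

Lemma reg_fun_inj s : injective (reg_fun s).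
Proof.
move=> o1 o2.
case: (pickP (fun x => reg_slot x == o1)) => [x1 /eqP <-|out1];
case: (pickP (fun x => reg_slot x == o2)) => [x2 /eqP <-|out2].
- by rewrite !reg_fun_slot => /reg_slot_inj /mulIg ->.
- rewrite reg_fun_slot reg_fun_out => [o2E|x]; last by rewrite out2.
  by have := out2 (x1 * s)%g; rewrite o2E eqxx.
- rewrite reg_fun_slot reg_fun_out => [o1E|x]; last by rewrite out1.
  by have := out1 (x2 * s)%g; rewrite o1E eqxx.
by rewrite !reg_fun_out // => x; rewrite ?out1 ?out2.
Qed.

Definition reg_perm (s : X) : {perm 'I_n} := perm (@reg_fun_inj s).

Lemma reg_perm_hom : is_hom reg_perm.
Proof.
move=> s t; apply/permP => o; rewrite permM !permE.
case: (pickP (fun x => reg_slot x == o)) => [x /eqP <-|out].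
  by rewrite !reg_fun_slot mulgA.
by rewrite !reg_fun_out // => x; rewrite out.
Qed.

Lemma ndiff_reg_perm_le s : ndiff (reg_perm s) 1%g <= #|X|.
Proof.
rewrite /ndiff -(card_imset _ reg_slot_inj) subset_leq_card //.
apply/fintype.subsetP => o; rewrite !inE permE perm1.
case: (pickP (fun x => reg_slot x == o)) => [x /eqP <- _|out]; first exact: imset_f.
by rewrite reg_fun_out ?eqxx // => x; rewrite out.
Qed.

Lemma ndiff_reg_perm s : s != 1%g -> ndiff (reg_perm s) 1%g = #|X|.
Proof.
move=> s_ne1; apply/eqP; rewrite eqn_leq ndiff_reg_perm_le /ndiff.
rewrite -(card_imset _ reg_slot_inj) subset_leq_card //.
apply/fintype.subsetP => o /imsetP[x _ ->]; rewrite !inE permE perm1 reg_fun_slot.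
by rewrite (inj_eq reg_slot_inj) -{2}[x]mulg1 (inj_eq (mulgI x)).
Qed.

End RegularPermutation.

Local Open Scope ring_scope.

Section WordApproximation.
Variables (k n : nat).

Lemma hdist_weval (f f' : 'I_k -> {perm 'I_n}) (e : R) w :
  (forall i, hdist (f i) (f' i) <= e) ->
  hdist (weval f w) (weval f' w) <= (size w)%:R * e.
Proof.
move=> close; elim: w => [|a w IHw] /=; first by rewrite hdistxx mul0r.
apply: le_trans (hdistM _ _ _ _) _.
rewrite -addn1 natrD mulrDl mul1r addrC lerD //.
by case: a.2; rewrite ?hdistV.
Qed.

Variables (Gamma : groupType) (g : 'I_k -> Gamma) (L : nat) (eta : R).
Variable psi : Gamma -> {perm 'I_n}.
Hypothesis psi_rep : almost_rep (ball g L) eta psi.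

Lemma almost_rep_weval w : (size w <= L)%N ->
  hdist (weval (fun i => psi (g i)) w) (psi (weval g w)) <= (size w)%:R * eta.
Proof.
have [psiM [_ psi1]] := psi_rep.
elim: w => [|[i b] w IHw] /= w_le.
  by rewrite psi1 ?hdistxx ?mul0r //; exists [::].
have {IHw} IHw := IHw (ltnW w_le).
set y := weval g w in IHw *.
have y_ball : ball g L y by exists w; split; [apply: ltnW|].
have gi_ball : ball g L (g i).
  by exists [:: (i, false)]; rewrite /= mulg1; split => //; apply: leq_trans w_le.
rewrite -addn1 natrD mulrDl mul1r.
case: b w_le => /= w_le.
  have giVy_ball : ball g L ((g i)^-1 * y)%g by exists ((i, true) :: w).
  apply: le_trans (hdist_triangle _ ((psi (g i))^-1 * psi y)%g _) _.
  rewrite hdistMl lerD // -(hdistMl _ _ (psi (g i))) mulKVg.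
  have {1}-> : y = (g i * ((g i)^-1 * y))%g by rewrite mulKVg.
  by apply/ltW/psiM; rewrite ?mulKVg.
apply: le_trans (hdist_triangle _ (psi (g i) * psi y)%g _) _.
rewrite hdistMl lerD // hdistC.
by apply/ltW/psiM => //; exists ((i, false) :: w).
Qed.

End WordApproximation.

Lemma word_detecting_action k n (u : seq (letter k)) :
  reduced u -> u <> [::] -> (((size u).+1)`! <= n)%N ->
  exists rho : 'I_k -> {perm 'I_n},
    hdist (weval rho u) 1%g = (((size u).+1)`!)%:R / n%:R
    /\ forall w, hdist (weval rho w) 1%g <= (((size u).+1)`!)%:R / n%:R.
Proof.
move=> u_red u_ne; rewrite -card_Sn => le_Sn.
have [sigma sigma_u] := reduced_word_not_law u_red u_ne.
exists (fun i => reg_perm le_Sn (sigma i)).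
split=> [|w]; rewrite (weval_hom (reg_perm_hom le_Sn)) hdistE.
  by rewrite ndiff_reg_perm.
by rewrite ler_wpM2r ?invr_ge0 // ler_nat ndiff_reg_perm_le.
Qed.

Lemma nat_ratio_approx (B : nat) (delta : R) :
  (0 < B)%N -> 0 < delta -> delta <= 1 ->
  exists n : nat, (B <= n)%N /\ delta / 2 <= B%:R / n%:R < delta.
Proof.
move=> B_gt0 d_gt0 d_le1; have B_ge1 : 1 <= B%:R :> R by rewrite ler1n.
set n := (Num.truncn (B%:R / delta)).+1.
have Bd_lt : B%:R / delta < n%:R by apply: Num.Theory.truncnS_gt.
have n_le : n%:R <= B%:R / delta + 1.
  by rewrite /n -addn1 natrD lerD2r Num.Theory.truncn_le divr_ge0 // ltW.
have B_le : B%:R <= B%:R / delta by rewrite ler_pdivlMr //; nra.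
have n_gt0 : 0 < n%:R :> R by rewrite ltr0n.
have dn_gt : B%:R < delta * n%:R by rewrite mulrC -ltr_pdivrMr.
have dn_le : delta * n%:R <= 2 * B%:R.
  apply: le_trans (ler_wpM2l (ltW d_gt0) n_le) _.
  by rewrite mulrDr mulrCA divff ?gt_eqF // mulr1; lra.
exists n; split; first by rewrite -(ler_nat R); lra.
rewrite ler_pdivlMr // mulrAC ler_pdivrMr // ltr_pdivrMr //.
by apply/andP; split; lra.
Qed.

Section StabilityBounds.
Variables (k : nat) (Gamma : groupType) (g : 'I_k -> Gamma).

Lemma size_le_Enorm (E : seq (seq (letter k))) r : r \in E -> (size r <= Enorm E)%N.
Proof. by move=> rE; rewrite /Enorm (big_rem r rE) leq_addr. Qed.

Lemma valid_pair_hdist_ker eps delta E n (rho : 'I_k -> {perm 'I_n}) w :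
  valid_pair g eps delta E ->
  (forall r, r \in E -> hdist (weval rho r) 1%g < delta) ->
  weval g w = 1%g -> hdist (weval rho w) 1%g <= (size w)%:R * eps.
Proof.
move=> [_ [_ [_ [_ valid]]]] rho_E gw1.
have [phi [phi_hom close]] := valid n rho rho_E.
have := hdist_weval w (fun i => ltW (close i)).
by rewrite (weval_hom phi_hom) gw1 (is_hom1 phi_hom).
Qed.

Lemma valid_pair_nonempty_relator eps delta E w :
  valid_pair g eps delta E -> in_ker g w -> w <> [::] -> (size w)%:R * eps < 1 ->
  exists2 r, r \in E & r <> [::].
Proof.
move=> vp [w_red gw1] w_ne w_eps; apply: contrapT => no_r.
have E_nil r : r \in E -> r = [::].
  by move=> rE; apply: contrapT => r_ne; apply: no_r; exists r.
have [rho [rho_w _]] := word_detecting_action w_red w_ne (leqnn _).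
have rho_E r : r \in E -> hdist (weval rho r) 1%g < delta.
  by move=> /E_nil ->; rewrite hdistxx; case: vp.
have := valid_pair_hdist_ker vp rho_E gw1.
by rewrite rho_w divff ?pnatr_eq0 -?lt0n ?fact_gt0 //; lra.
Qed.

Lemma valid_pair_delta_le eps delta E r :
  valid_pair g eps delta E -> r \in E -> r <> [::] -> delta <= 2 * ((size r)%:R * eps).
Proof.
move=> vp rE r_ne; have [d_gt0 [d_le1 [_ [E_ker _]]]] := vp.
have [r_red gr1] := E_ker r rE.
have [n [le_Bn /andP[d_le B_lt]]] := nat_ratio_approx (fact_gt0 (size r).+1) d_gt0 d_le1.
have [rho [rho_r rho_le]] := word_detecting_action r_red r_ne le_Bn.
have := valid_pair_hdist_ker vp (fun r' _ => le_lt_trans (rho_le r') B_lt) gr1.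
by rewrite rho_r; lra.
Qed.

Lemma valid_pair_ratio_ge eps delta E w :
  0 < eps -> valid_pair g eps delta E -> in_ker g w -> w <> [::] ->
  (size w)%:R * eps < 1 -> (2 * eps)^-1 <= (Enorm E)%:R / delta.
Proof.
move=> eps_gt0 vp w_ker w_ne w_eps; have [d_gt0 _] := vp.
have [r rE r_ne] := valid_pair_nonempty_relator vp w_ker w_ne w_eps.
have r_le : (size r)%:R * eps <= (Enorm E)%:R * eps.
  by apply: ler_wpM2r; [exact: ltW | rewrite ler_nat size_le_Enorm].
have := valid_pair_delta_le vp rE r_ne.
by rewrite ler_pdivlMr // (mulrC _ delta) ler_pdivrMr ?mulr_gt0 //; lra.
Qed.

Lemma stab_fun_ge x w :
  stable g -> in_ker g w -> w <> [::] -> (size w)%:R < x -> x / 2 <= stab_fun g x.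
Proof.
move=> g_stable w_ker w_ne lt_wx.
have x_gt0 : 0 < x by apply: le_lt_trans lt_wx.
have xV_gt0 : 0 < x^-1 by rewrite invr_gt0.
apply: lb_le_inf => [|_ [delta [E [vp ->]]]].
  have [delta [E vp]] := g_stable _ xV_gt0.
  by exists ((Enorm E)%:R / delta), delta, E.
have := valid_pair_ratio_ge xV_gt0 vp w_ker w_ne.
by rewrite invfM invrK (mulrC 2^-1) ltr_pdivrMr // mul1r; apply.
Qed.

Lemma stab_fun_adherent x y : stable g -> 0 < x -> stab_fun g x < y ->
  exists delta E, valid_pair g x^-1 delta E /\ (Enorm E)%:R / delta < y.
Proof.
move=> g_stable x_gt0 lt_Fy.
have [|delta [E vp]] := g_stable x^-1; first by rewrite invr_gt0.
case: (inf_lt _ lt_Fy) => [|_ [delta' [E' [vp' ->]]] lt_y]; last by exists delta', E'.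
by exists ((Enorm E)%:R / delta), delta, E.
Qed.

End StabilityBounds.

Section AlmostRepresentations.
Variables (k : nat) (Gamma : groupType) (g : 'I_k -> Gamma) (L n : nat).
Variable psi : Gamma -> {perm 'I_n}.
Hypothesis psi_rep : almost_rep (ball g L) L%:R^-1 psi.

Lemma almost_rep_near_hom eps delta E :
  valid_pair g eps delta E -> (Enorm E)%:R < delta * L%:R ->
  exists phi : Gamma -> {perm 'I_n},
    is_hom phi /\ forall i, hdist (psi (g i)) (phi (g i)) < eps.
Proof.
move=> vp lt_EL; have [d_gt0 [d_le1 [_ [E_ker valid]]]] := vp.
have psi1 : psi 1%g = 1%g by case: psi_rep => _ [_ ->] //; exists [::].
apply: valid => r rE; have [_ gr1] := E_ker r rE.
have r_le : (size r)%:R <= (Enorm E)%:R :> R by rewrite ler_nat size_le_Enorm.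
have r_L : (size r <= L)%N.
  rewrite -(ler_nat R); apply/ltW/(le_lt_trans r_le)/(lt_le_trans lt_EL).
  by rewrite ler_piMl.
have := almost_rep_weval psi_rep r_L; rewrite gr1 psi1 => /le_lt_trans; apply.
rewrite -[_ * _^-1]/(_ / _) ltr_pdivrMr; first by lra.
by rewrite -(pmulr_rgt0 _ d_gt0); apply: le_lt_trans lt_EL.
Qed.

Lemma near_hom_inj_ball (phi : Gamma -> {perm 'I_n}) eps l :
  0 <= eps -> is_hom phi -> (forall i, hdist (psi (g i)) (phi (g i)) < eps) ->
  (l + l <= L)%N -> (l + l).+1%:R / L%:R + (l + l)%:R * eps <= 1 ->
  forall a b, ball g l a -> ball g l b -> phi a = phi b -> a = b.
Proof.
move=> eps_ge0 phi_hom close le_lL bound a b al bl phi_ab; apply: contrapT => a_ne_b.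
have [w [w_le w_c]] := ball_invM al bl.
set c := (a^-1 * b)%g in w_c.
have c_ne1 : c <> 1%g by move=> c1; apply: a_ne_b; rewrite -(mulKVg a b) -/c c1 mulg1.
have w_L : (size w <= L)%N := leq_trans w_le le_lL.
have far : 1 - L%:R^-1 < hdist (psi c) 1%g.
  by case: psi_rep => _ [+ _]; apply => //; exists w.
have near_psi := almost_rep_weval psi_rep w_L; rewrite w_c hdistC in near_psi.
have near_phi := hdist_weval w (fun i => ltW (close i)).
rewrite (weval_hom phi_hom) w_c /c phi_hom (is_homV phi_hom) phi_ab mulVg in near_phi.
have w_l : (size w)%:R <= (l + l)%:R :> R by rewrite ler_nat.
have w_Linv : (size w)%:R * L%:R^-1 <= (l + l)%:R / L%:R :> R.
  by apply: ler_wpM2r; rewrite ?invr_ge0.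
have w_eps : (size w)%:R * eps <= (l + l)%:R * eps by exact: ler_wpM2r.
have := hdist_triangle (psi c) (weval (fun i => psi (g i)) w) 1%g.
by rewrite -addn1 natrD mulrDl mul1r in bound; lra.
Qed.

End AlmostRepresentations.

Theorem proposition2p20 (k : nat) (Gamma : groupType) (g : 'I_k -> Gamma) :
  epi g -> not_iso g -> sofic Gamma -> stable g ->
  exists C : R, (0 < C)%R /\
    forall l : nat, (C <= l%:R)%R ->
      forall D : nat,
        is_least (sofic_profile_at g
                    (Num.truncn (2 * stab_fun g (10 * l%:R))%R)) D ->
        residual_le g l D`!.
Proof.
move=> _ [w0 [w0_ker w0_ne]] _ g_stable.
exists ((size w0)%:R + 1); split => [|l l_ge D [[psi psi_rep] _]]; first by rewrite ltr_wpDl.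
set F := stab_fun g (10 * l%:R) in psi_rep *; set L := Num.truncn (2 * F) in psi_rep.
have w0_ge0 := ler0n R (size w0).
have F_ge : 5 * l%:R <= F.
  have w0_lt : (size w0)%:R < 10 * l%:R :> R by lra.
  by have := stab_fun_ge g_stable w0_ker w0_ne w0_lt; rewrite -/F; lra.
have L_gt : 2 * F - 1 < L%:R.
  by have := Num.Theory.truncnS_gt (2 * F); rewrite -/L -addn1 natrD; lra.
have [||delta [E [vp ratio]]] :=
  stab_fun_adherent (x := 10 * l%:R) (y := 2 * F - 1) g_stable.
- lra.
- by rewrite -/F; lra.
have [|phi [phi_hom close]] := almost_rep_near_hom psi_rep vp.
  by case: vp => d_gt0 _; rewrite mulrC -ltr_pdivrMr //; lra.
exists {perm 'I_D}, phi; split=> //; split; last by rewrite cardsT card_Sn.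
have l_eps : (l + l)%:R * (10 * l%:R)^-1 = 5^-1 :> R.
  by rewrite natrD; field; rewrite gt_eqF //; lra.
apply: (near_hom_inj_ball psi_rep (l := l) _ phi_hom close); rewrite ?l_eps.
- by rewrite invr_ge0; lra.
- by rewrite -(ler_nat R) natrD; lra.
have : (l + l).+1%:R / L%:R <= 4 / 5 :> R by rewrite -addn1 !natrD ler_pdivrMr; lra.
lra.
Qed.
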